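(* Let $G$ be a minimal DPDP-graph and let $(D,P)$ be a DP-pair in $G$. Then: (1) $D$ is a maximal independent set in $G$. (2) The induced subgraph $G[P]$ consists of independent edges, i.e., $\delta(G[P])=\Delta(G[P])=1$. (3) If $x\in P$, then $|N_G(x)\setminus P|=1$ or $N_G(x)\setminus P$ is a nonempty subset of the set $L_G$ of leaves of $G$. (4) $G$ is a 2-subdivision graph $S_2(H)$ of some graph $H$ (without isolated vertices, with respect to some function $\alpha$).
   Context: Graphs are finite and may have multiple edges and loops. A leaf is a vertex of degree one. A set $D\subseteq V(G)$ is dominating if every vertex outside $D$ has a neighbor in $D$; $P$ is paired-dominating if it is dominating and the subgraph induced by $P$ has a perfect matching. A DP-pair of $G$ is a pair $(D,P)$ of disjoint sets with $V(G)=D\cup P$, $D$ dominating and $P$ paired-dominating. A DPDP-graph is a graph with a DP-pair; a minimal DPDP-graph is a DPDP-graph no proper spanning subgraph of which is a DPDP-graph. 2-subdivision graph: for a graph $H$ with no isolated vertex, set of leaves $L_H$, and $\alpha:L_H\to\mathbb{N}=\{1,2,\dots\}$, $S_2(H)$ has vertex set $(V_H\setminus L_H)\cup\{(v,i): v\in L_H, 1\le i\le \alpha(v)\}$ together with two new vertices for each edge $e$ of $H$ ($u_e,v_e$ if $e$ joins $u\ne v$; $v_e^1,v_e^2$ if $e$ is a loop at $v$). Its edges are: the edge joining the two new vertices of each $e$; for $v\in V_H\setminus L_H$, $vv_e$ for each non-loop edge $e$ at $v$ and $vv_e^1,vv_e^2$ for each loop $e$ at $v$; for $v\in L_H$ with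 incident edge $e$, the edges $v_e(v,i)$, $1\le i\le\alpha(v)$. *)

From HB Require Import structures.
From mathcomp Require Import all_boot.
Set Implicit Arguments. Unset Strict Implicit. Unset Printing Implicit Defensive.

(* Finite multigraphs (multiple edges and loops allowed): a finite vertex
   type V, a finite edge type E and an incidence map [ends : E -> V * V];
   the pair of ends is read as unordered; e is a loop iff both ends coincide.
   All notions below are relative to an edge subset S : {set E}; the graph
   itself is S = setT, and spanning subgraphs are given by S \subset setT. *)

Section Graph.
Variables (V E : finType) (ends : E -> V * V).

Definition endk (p : E * bool) : V :=
  if p.2 then (ends p.1).2 else (ends p.1).1.

(* degree: number of edge-sides at v (a loop counts twice) *)
Definition deg (S : {set E}) (v : V) : nat :=
  #|[set p : E * bool | (p.1 \in S) && (endk p == v)]|.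

Definition adj (S : {set E}) (u v : V) : bool :=
  [exists e in S, (ends e == (u, v)) || (ends e == (v, u))].

Definition nbhd (S : {set E}) (x : V) : {set V} := [set y | adj S x y].

Definition leaves (S : {set E}) : {set V} := [set v | deg S v == 1].

Definition dominating (S : {set E}) (D : {set V}) : bool :=
  [forall v, (v \notin D) ==> [exists u in D, adj S v u]].

Definition induced_perfect_matching (S : {set E}) (P : {set V}) : bool :=
  [exists M : {set E}, (M \subset S) &&
     [forall e in M, [&& (ends e).1 != (ends e).2, (ends e).1 \in P
                       & (ends e).2 \in P]] &&
     [forall x in P,
        #|[set e in M | ((ends e).1 == x) || ((ends e).2 == x)]| == 1]].

Definition paired_dominating (S : {set E}) (P : {set V}) : bool :=
  dominating S P && induced_perfect_matching S P.

Definition DPpair (S : {set E}) (D P : {set V}) : bool :=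
  [&& D :&: P == set0, D :|: P == setT, dominating S D
    & paired_dominating S P].

Definition DPDP (S : {set E}) : bool := [exists D, exists P, DPpair S D P].

Definition minimal_DPDP : bool :=
  DPDP setT && [forall S : {set E}, (S \proper setT) ==> ~~ DPDP S].

Definition independent (S : {set E}) (D : {set V}) : bool :=
  [forall e in S, ~~ (((ends e).1 \in D) && ((ends e).2 \in D))].

(* degree of x in the induced subgraph G[P] (loops count twice) *)
Definition induced_deg (S : {set E}) (P : {set V}) (x : V) : nat :=
  #|[set p : E * bool | [&& p.1 \in S, endk p == x, (ends p.1).1 \in P
                          & (ends p.1).2 \in P]]|.

End Graph.

Record mgraph := MGraph {
  gV : finType;
  gE : finType;
  gends : gE -> gV * gV }.

Definition no_isolated (H : mgraph) : Prop :=
  forall v : gV H, 0 < deg (@gends H) setT v.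

Definition hleaf (H : mgraph) (v : gV H) : bool := deg (@gends H) setT v == 1.

Definition mg_iso (G1 G2 : mgraph) : Prop :=
  exists (f : gV G1 -> gV G2) (g : gE G1 -> gE G2),
    [/\ bijective f, bijective g &
      forall e, @gends G2 (g e) = (f (@gends G1 e).1, f (@gends G1 e).2)
             \/ @gends G2 (g e) = (f (@gends G1 e).2, f (@gends G1 e).1)].

(* The 2-subdivision graph S_2(H) w.r.t. alpha (only values on leaves used).
   Vertices: non-leaves v of H; copies (v,i), i < alpha v, of each leaf v
   (index i stands for i+1); two new vertices (e,false),(e,true) per edge e,
   where (e,false) is "u_e" / "v_e^1" for the first end u of e and (e,true)
   is "v_e" / "v_e^2" for the second end v.
   Edges: (a) (e,false)-(e,true) for each e; (b) v-(e,k) whenever the k-th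
   end of e is the non-leaf v; (c) (e,k)-(v,i) whenever the k-th end of e is
   the leaf v (its unique edge-side) and i < alpha v. *)
Section S2.
Variables (H : mgraph) (alpha : gV H -> nat).

Definition S2_nonleaf := {v : gV H | ~~ hleaf v}.
Definition S2_leafcopy := {v : {v : gV H | hleaf v} & 'I_(alpha (val v))}.
Definition S2_V : finType := ((S2_nonleaf + S2_leafcopy) + (gE H * bool))%type.

Definition S2_Eb := {p : gE H * bool | ~~ hleaf (endk (@gends H) p)}.
Definition S2_Ec :=
  {x : {p : gE H * bool | hleaf (endk (@gends H) p)} &
       'I_(alpha (endk (@gends H) (val x)))}.
Definition S2_E : finType := ((gE H + S2_Eb) + S2_Ec)%type.

Definition S2_ends (e : S2_E) : S2_V * S2_V :=
  match e with
  | inl (inl a) => (inr (a, false), inr (a, true))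
  | inl (inr b) =>
      (inl (inl (exist _ (endk (@gends H) (val b)) (valP b))), inr (val b))
  | inr c =>
      (inr (val (tag c)),
       inl (inr (existT (fun v : {v : gV H | hleaf v} => 'I_(alpha (val v)))
                        (exist _ (endk (@gends H) (val (tag c))) (valP (tag c)))
                        (tagged c))))
  end.

Definition S2 : mgraph := MGraph S2_ends.
End S2.

From HB Require Import structures.
From mathcomp Require Import all_boot.
Set Implicit Arguments. Unset Strict Implicit. Unset Printing Implicit Defensive.

(* Fix a perfect matching M of G[P].  By minimality, deleting an edge outside M must
   destroy the domination of D or of P.  Hence such an edge joins P to D, G has neither
   loops nor parallel edges, and a vertex x of P has at most one non-leaf neighbour in D:
   if x had D-neighbours y <> y' with y not a leaf, the edge xy could be deleted, x staying
   dominated by y' and y by another of its P-neighbours.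
   For (4), H has the edges of M, each end x being identified with its non-leaf
   D-neighbour if it has one; the other ends are the leaves of H, and their leaf
   D-neighbours are their alpha(x) copies in S2(H).  The natural map from S2(H) to G is a
   bijection on vertices and onto on edges, and S2(H) has no parallel edges, so it is an
   isomorphism. *)

Lemma inj_surj_bij (T T' : finType) (f : T -> T') :
  injective f -> (forall y, exists x, f x = y) -> bijective f.
Proof.
move=> f_inj f_surj; apply: (inj_card_bij f_inj).
rewrite -(card_codom f_inj); apply/subset_leq_card/subsetP => y _.
by have [x <-] := f_surj y; apply: codom_f.
Qed.

Section Multigraph.
Variables (V E : finType) (ends : E -> V * V).

Definition joins e u v := (ends e == (u, v)) || (ends e == (v, u)).

Lemma joinsC e u v : joins e u v = joins e v u.
Proof. by rewrite /joins orbC. Qed.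

Lemma joins_ends e : joins e (ends e).1 (ends e).2.
Proof. by rewrite /joins -surjective_pairing eqxx. Qed.

Lemma joins_cases e a b c d :
  joins e a b -> joins e c d -> (a = c /\ b = d) \/ (a = d /\ b = c).
Proof. by rewrite /joins => /orP [] /eqP -> /orP [] /eqP [-> ->]; auto. Qed.

Lemma joins_uniq e a b b' : joins e a b -> joins e a b' -> b = b'.
Proof. by move=> jab jab'; case: (joins_cases jab jab') => -[] // -> ->. Qed.

Lemma endk_joins e k : joins e (endk ends (e, k)) (endk ends (e, ~~ k)).
Proof. by case: k; rewrite /joins /endk /= -surjective_pairing eqxx ?orbT. Qed.

Lemma joins_endk e a b :
  joins e a b -> exists k, endk ends (e, k) = a /\ endk ends (e, ~~ k) = b.
Proof.
by rewrite /joins => /orP [] /eqP eab; [exists false | exists true]; rewrite /endk eab.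
Qed.

Lemma adjP (S : {set E}) u v :
  reflect (exists2 e, e \in S & joins e u v) (adj ends S u v).
Proof. exact: (iffP exists_inP). Qed.

Lemma adjC (S : {set E}) u v : adj ends S u v = adj ends S v u.
Proof. by apply/adjP/adjP => -[e eS j]; exists e; rewrite // joinsC. Qed.

Lemma dominating_nbr (S : {set E}) X v : dominating ends S X -> v \notin X ->
  exists2 u, u \in X & exists2 e, e \in S & joins e v u.
Proof.
by move=> /forallP /(_ v) + vX; rewrite vX => /exists_inP [u uX /adjP]; exists u.
Qed.

Lemma dominating_setD1 e X : dominating ends setT X ->
  (forall v u, v \notin X -> u \in X -> joins e v u ->
     exists2 u', u' \in X & exists2 e', e' != e & joins e' v u') ->
  dominating ends (setT :\ e) X.
Proof.
move=> domX reroute; apply/forallP => v; apply/implyP => vX.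
have [u uX [e1 _ j1]] := dominating_nbr domX vX.
have [e1e|e1e] := eqVneq e1 e; last first.
  by apply/exists_inP; exists u => //; apply/adjP; exists e1; rewrite // !inE e1e.
subst e1; have [u' u'X [e' e'e j']] := reroute v u vX uX j1.
by apply/exists_inP; exists u' => //; apply/adjP; exists e'; rewrite // !inE e'e.
Qed.

Lemma endk_inj e : (ends e).1 != (ends e).2 -> injective (fun k => endk ends (e, k)).
Proof. by move=> nl [] [] //=; rewrite /endk /= => same; rewrite same eqxx in nl. Qed.

Definition sides v := [set p : E * bool | (p.1 \in [set: E]) && (endk ends p == v)].

Lemma side_at e k v : endk ends (e, k) = v -> (e, k) \in sides v.
Proof. by move=> <-; rewrite inE in_setT eqxx. Qed.

Lemma leaf_adj_uniq y x x' : y \in leaves ends setT ->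
  adj ends setT y x -> adj ends setT y x' -> x = x'.
Proof.
rewrite inE => /eqP deg1 /adjP [e _ j] /adjP [e' _ j'].
have [k [ek _]] := joins_endk j; have [k' [ek' _]] := joins_endk j'.
have /card_le1_eqP side_eq : #|sides y| <= 1 by rewrite [#|_|]deg1.
have [e'e _] := side_eq (e, k) (e', k') (side_at ek) (side_at ek').
by move: j'; rewrite e'e; apply: joins_uniq.
Qed.

Lemma other_edge y e a : joins e y a -> (ends e).1 != (ends e).2 ->
  y \notin leaves ends setT -> exists2 e', e' != e & exists b, joins e' y b.
Proof.
move=> j noloop; rewrite inE => deg_ne1; have [k [ek _]] := joins_endk j.
have [[e' k'] ] : exists2 p, p \in sides y & p != (e, k).
  apply/exists_inP; apply: contraNT deg_ne1; rewrite negb_exists_in => /forall_inP same.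
  apply/(@cards1P _ (sides y)); exists (e, k); apply/setP => p; rewrite inE.
  by apply/idP/eqP => [/same /negPn /eqP //|->]; apply: side_at.
rewrite !inE /= => /eqP ek' side_ne; exists e'; last first.
  by exists (endk ends (e', ~~ k')); rewrite -{1}ek'; apply: endk_joins.
apply: contraNneq side_ne => e'e; subst e'.
by rewrite (endk_inj noloop (etrans ek' (esym ek))).
Qed.

End Multigraph.

Definition parallel_free (G : mgraph) :=
  forall e e' a b, joins (@gends G) e a b -> joins (@gends G) e' a b -> e = e'.

Lemma parallel_free_mg_iso (G1 G2 : mgraph) (f : gV G1 -> gV G2) (g : gE G1 -> gE G2) :
  parallel_free G1 -> injective f -> (forall v, exists u, f u = v) ->
  (forall e', exists e, g e = e') ->
  (forall e, joins (@gends G2) (g e) (f (@gends G1 e).1) (f (@gends G1 e).2)) ->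
  mg_iso G1 G2.
Proof.
move=> pf f_inj f_surj g_surj g_ends.
have g_inj : injective g.
  move=> e e' gee'; apply: pf (joins_ends _ e) _.
  have := g_ends e'; rewrite -gee' => /(joins_cases (g_ends e)).
  case=> -[/f_inj -> /f_inj ->]; [exact: joins_ends | rewrite joinsC; exact: joins_ends].
exists f, g; split; [exact: inj_surj_bij | exact: inj_surj_bij |].
by move=> e; case/orP: (g_ends e) => /eqP ->; [left | right].
Qed.

Lemma mg_iso_sym (G1 G2 : mgraph) : mg_iso G1 G2 -> mg_iso G2 G1.
Proof.
move=> [f [g [[f' fK f'K] [g' gK g'K] f_ends]]].
exists f', g'; split; [exact: Bijective f'K fK | exact: Bijective g'K gK |].
move=> e; have := f_ends (g' e); rewrite g'K.
by case=> ->; rewrite /= !fK; [left | right]; rewrite -surjective_pairing.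
Qed.

Section S2ParallelFree.
Variables (H : mgraph) (alpha : gV H -> nat).

Lemma S2_Ec_inj (c c' : S2_Ec alpha) : S2_ends (inr c) = S2_ends (inr c') -> c = c'.
Proof.
case: c c' => [[p pl] i] [[p' pl'] i'] e.
have pp' : p = p' by case: e.
subst p'; have ? := bool_irrelevance pl pl'; subst pl'.
(* The copy index is compared as a nat, avoiding an equality of dependent pairs. *)
have /val_inj -> // : val i = val i'.
by move: e => /(congr1 (fun q : S2_V alpha * S2_V alpha =>
  if q.2 is inl (inr x) then nat_of_ord (tagged x) else 0)).
Qed.

Lemma S2_parallel_free : parallel_free (S2 alpha).
Proof.
move=> s s' a b j j'.
have {j j'} [] : S2_ends s = S2_ends s' \/ S2_ends s = ((S2_ends s').2, (S2_ends s').1).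
  by move: j j'; rewrite /joins /= => /orP [] /eqP -> /orP [] /eqP ->; auto.
- case: s s' => [[e|b1]|c] [[e'|b1']|c'] //=.
  + by case=> ->.
  + by case=> _ /val_inj ->.
  + by move/S2_Ec_inj ->.
- by case: s s' => [[e|b1]|c] [[e'|b1']|c'] //= [].
Qed.
End S2ParallelFree.

Section MinimalDPDP.
Variables (V E : finType) (ends : E -> V * V) (D P : {set V}) (M : {set E}).

Definition M_at x := [set e in M | ((ends e).1 == x) || ((ends e).2 == x)].

Hypothesis minG : minimal_DPDP ends.
Hypothesis DP_disjoint : D :&: P = set0.
Hypothesis DP_cover : D :|: P = setT.
Hypothesis domD : dominating ends setT D.
Hypothesis domP : dominating ends setT P.
Hypothesis M_edge : forall e, e \in M ->
  [&& (ends e).1 != (ends e).2, (ends e).1 \in P & (ends e).2 \in P].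
Hypothesis M_perfect : forall x, x \in P -> #|M_at x| = 1.

Lemma inD v : (v \in D) = (v \notin P).
Proof.
have := in_setT v; rewrite -DP_cover inE.
have := in_set0 v; rewrite -DP_disjoint inE.
by case: (v \in D); case: (v \in P).
Qed.

Lemma M_endk_inP e k : e \in M -> endk ends (e, k) \in P.
Proof. by case/M_edge/and3P; case: k. Qed.

Lemma joins_M_at e a b : e \in M -> joins ends e a b -> e \in M_at a.
Proof. by rewrite inE => -> /orP [] /eqP ->; rewrite eqxx ?orbT. Qed.

Lemma nonmatching_edge_essential e : e \notin M ->
  dominating ends (setT :\ e) D -> dominating ends (setT :\ e) P -> False.
Proof.
move=> eM domD' domP'; case/andP: minG => _ /forallP /(_ (setT :\ e)).
rewrite properD1 ?inE //= => /negP; apply; apply/existsP; exists D.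
apply/existsP; exists P; rewrite /DPpair DP_disjoint DP_cover !eqxx domD'.
rewrite /paired_dominating domP' /=; apply/existsP; exists M.
rewrite -andbA; apply/and3P; split.
- by apply/subsetP => f fM; rewrite !inE andbT; apply: contraNneq eM => <-.
- by apply/forall_inP => f /M_edge.
- by apply/forall_inP => x /M_perfect ->.
Qed.

Lemma nonmatching_edge_crosses e : e \notin M ->
  ((ends e).1 \in P) != ((ends e).2 \in P).
Proof.
move=> eM; apply/negP => /eqP same_side.
have keep X : X = D \/ X = P -> dominating ends setT X ->
    dominating ends (setT :\ e) X.
  move=> DorP domX; apply: dominating_setD1 domX _ => v u vX uX j.
  have vu : (v \in P) = (u \in P).
    by case: (joins_cases (joins_ends ends e) j) => -[<- <-]; rewrite same_side.
  by exfalso; case: DorP vX uX => ->; rewrite ?inD vu; case: (u \in P).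
by apply: (nonmatching_edge_essential eM); apply: keep; auto.
Qed.

Lemma edge_meets_P e : ((ends e).1 \in P) || ((ends e).2 \in P).
Proof.
have [/M_edge /and3P [_ -> //]|/nonmatching_edge_crosses] := boolP (e \in M).
by case: (_ \in P); case: (_ \in P).
Qed.

Lemma no_loop e : (ends e).1 != (ends e).2.
Proof.
have [/M_edge /and3P [] //|eM] := boolP (e \in M).
by apply: contraNneq (nonmatching_edge_crosses eM) => ->.
Qed.

Lemma joins_notinP e a b : joins ends e a b -> a \notin P -> b \in P.
Proof.
move=> j; have := edge_meets_P e.
by case: (joins_cases (joins_ends ends e) j) => -[-> ->] /orP [] ->.
Qed.

Lemma joins_D_nonmatching e a b : joins ends e a b -> b \in D -> e \notin M.
Proof.
rewrite inD => j; apply: contra => /M_edge /and3P [_ e1 e2].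
by case: (joins_cases (joins_ends ends e) j) => -[ea eb]; rewrite -?ea -?eb.
Qed.

Lemma nonmatching_edge_ends e : e \notin M ->
  exists x y, [/\ x \in P, y \in D & joins ends e x y].
Proof.
move/nonmatching_edge_crosses; have := joins_ends ends e.
case e1P: ((ends e).1 \in P); case e2P: ((ends e).2 \in P) => // j _.
  by exists (ends e).1, (ends e).2; rewrite inD e2P.
by exists (ends e).2, (ends e).1; rewrite inD e1P joinsC.
Qed.

Lemma nonmatching_edge_unique e e' a b : e \notin M ->
  joins ends e a b -> joins ends e' a b -> e' = e.
Proof.
move=> eM j j'; apply/eqP/negPn/negP => e'e.
have reroute X : dominating ends setT X -> dominating ends (setT :\ e) X.
  move=> domX; apply: dominating_setD1 domX _ => v u _ uX jvu.
  exists u => //; exists e' => //.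
  by case: (joins_cases j jvu) => -[<- <-]; rewrite // joinsC.
exact: nonmatching_edge_essential eM (reroute _ domD) (reroute _ domP).
Qed.

Lemma joins_inj e e' a b : joins ends e a b -> joins ends e' a b -> e = e'.
Proof.
move=> j j'.
have [eM|eM] := boolP (e \in M); last by rewrite (nonmatching_edge_unique eM j j').
have [e'M|e'M] := boolP (e' \in M); last by rewrite (nonmatching_edge_unique e'M j' j).
have aP : a \in P.
  case/and3P: (M_edge eM) => _ e1 e2.
  by case: (joins_cases (joins_ends ends e) j) => -[ea eb]; rewrite -?ea -?eb.
have /card_le1_eqP Ma := eq_leq (M_perfect aP).
exact/esym/(Ma e e' (joins_M_at eM j) (joins_M_at e'M j')).
Qed.

Lemma matched_side x : x \in P -> exists m k, m \in M /\ endk ends (m, k) = x.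
Proof.
move=> xP; have /card_gt0P [m] : 0 < #|M_at x| by rewrite M_perfect.
by rewrite inE => /andP [mM /orP [] /eqP mx]; exists m; [exists false | exists true].
Qed.

Lemma matched_side_uniq m k m' k' : m \in M -> m' \in M ->
  endk ends (m, k) = endk ends (m', k') -> (m, k) = (m', k').
Proof.
move=> mM m'M same.
have /card_le1_eqP Mx := eq_leq (M_perfect (M_endk_inP k' m'M)).
have m'm : m' = m.
  apply: (Mx m m'); last exact: joins_M_at m'M (endk_joins ends m' k').
  by rewrite -same; apply: joins_M_at mM (endk_joins ends m k).
by subst m'; rewrite (endk_inj (no_loop m) same).
Qed.

Lemma nonleaf_D_neighbour_uniq x y y' : x \in P -> y \in D ->
  adj ends setT x y -> y \notin leaves ends setT ->
  y' \in D -> adj ends setT x y' -> y' = y.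
Proof.
move=> xP yD /adjP [e _ j] ynl y'D /adjP [e' _ j'].
apply/eqP/negPn/negP => y'y; have eM := joins_D_nonmatching j yD.
apply: (nonmatching_edge_essential eM).
- apply: dominating_setD1 domD _ => v u vD uD jvu.
  have {jvu} -> : v = x.
    by case: (joins_cases j jvu) => -[// _ vy]; rewrite -vy yD in vD.
  exists y' => //; exists e' => //.
  by apply: contraNneq y'y => e'e; rewrite e'e in j'; rewrite (joins_uniq j j').
- apply: dominating_setD1 domP _ => v u vP uP jvu.
  have {jvu} -> : v = y.
    by case: (joins_cases j jvu) => -[vx _ //]; rewrite -vx xP in vP.
  have [e2 e2e [b jb]] := other_edge (etrans (joinsC _ _ _ _) j) (no_loop e) ynl.
  by exists b; [apply: (joins_notinP jb); rewrite -inD | exists e2].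
Qed.

Lemma D_maximal_independent : maxset (independent ends setT) D.
Proof.
apply/maxsetP; split.
  apply/forall_inP => e _; rewrite !inD negb_and !negbK; exact: edge_meets_P.
move=> B /forall_inP B_indep DB; apply/eqP; rewrite eqEsubset DB andbT.
apply/subsetP => v vB; apply: contraT => vD.
have [u uD [e _ j]] := dominating_nbr domD vD.
have uB : u \in B by apply: (subsetP DB).
have := B_indep e (in_setT e).
by case: (joins_cases (joins_ends ends e) j) => -[-> ->]; rewrite vB uB.
Qed.

Lemma induced_deg_P x : x \in P -> induced_deg ends setT P x = 1.
Proof.
move=> xP; have [m [k [mM mk]]] := matched_side xP.
apply/eqP/cards1P; exists (m, k); apply/setP => -[e k']; rewrite !inE /=.
apply/idP/eqP => [/and3P [/eqP ek' e1 e2]|[-> ->]]; last first.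
  by rewrite mk eqxx; case/and3P: (M_edge mM) => _ -> ->.
have eM : e \in M by apply: contraT => /nonmatching_edge_crosses; rewrite e1 e2.
by apply: matched_side_uniq; rewrite // mk.
Qed.

Definition Dnbhd x := [set y in D | adj ends setT x y].

Definition leafy x := Dnbhd x \subset leaves ends setT.

Lemma nbhd_setDP x : nbhd ends setT x :\: P = Dnbhd x.
Proof. by apply/setP => y; rewrite !inE inD. Qed.

Lemma Dnbhd_neq0 x : x \in P -> exists y, y \in Dnbhd x.
Proof.
move=> xP; have xD : x \notin D by rewrite inD xP.
have [y yD [e _ j]] := dominating_nbr domD xD.
by exists y; rewrite inE yD; apply/adjP; exists e.
Qed.

Lemma P_neighbourhood x : x \in P ->
  #|nbhd ends setT x :\: P| = 1 \/
  (nbhd ends setT x :\: P != set0 /\ nbhd ends setT x :\: P \subset leaves ends setT).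
Proof.
move=> xP; rewrite nbhd_setDP; have [y yN] := Dnbhd_neq0 xP.
have [lx|/subsetPn [y0 y0N y0nl]] := boolP (leafy x).
  by right; split => //; apply/set0Pn; exists y.
left; apply/eqP/cards1P; exists y0; apply/setP => y'; rewrite inE.
apply/idP/eqP => [|-> //]; move: y0N; rewrite !inE => /andP [y0D xy0] /andP [y'D xy'].
exact: nonleaf_D_neighbour_uniq xP y0D xy0 y0nl y'D xy'.
Qed.

(* The vertex of H represented by v: H has vertex set [rep @: setT] and edge set M. *)
Definition rep v :=
  if v \in P then (if leafy v then v else odflt v [pick y in Dnbhd v])
  else if v \in leaves ends setT then odflt v [pick x | adj ends setT v x] else v.

Lemma rep_leafy x : x \in P -> leafy x -> rep x = x.
Proof. by move=> xP lx; rewrite /rep xP lx. Qed.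

Lemma rep_nonleafy x : x \in P -> ~~ leafy x ->
  [/\ rep x \in D, rep x \notin leaves ends setT, adj ends setT x (rep x)
    & forall y, y \in Dnbhd x -> y = rep x].
Proof.
move=> xP /subsetPn [y0 y0N y0nl].
have all_y0 y : y \in Dnbhd x -> y = y0.
  move: y0N; rewrite !inE => /andP [y0D xy0] /andP [yD xy].
  exact: nonleaf_D_neighbour_uniq xP y0D xy0 y0nl yD xy.
have -> : rep x = y0.
  rewrite /rep xP; case: ifP => [/subsetP sub|_]; first by move: y0nl; rewrite sub.
  by case: pickP => [y /all_y0 //|/(_ y0)]; rewrite y0N.
by move: y0N; rewrite inE => /andP [y0D xy0]; split.
Qed.

Lemma rep_nonleaf_neighbour x y : x \in P -> y \in Dnbhd x ->
  y \notin leaves ends setT -> rep x = y.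
Proof.
move=> xP yN ynl; have nlx : ~~ leafy x by apply/subsetPn; exists y.
by have [_ _ _ all_rep] := rep_nonleafy xP nlx; rewrite (all_rep y yN).
Qed.

Lemma rep_D_nonleaf y : y \in D -> y \notin leaves ends setT -> rep y = y.
Proof. by move=> yD ynl; rewrite /rep -[y \in P]negbK -inD yD (negbTE ynl). Qed.

Lemma leafy_of_leaf_neighbour x y : x \in P -> y \in Dnbhd x ->
  y \in leaves ends setT -> leafy x.
Proof.
move=> xP yN yl; apply/subsetP => y' y'N; apply: contraT => y'nl.
have [_ _ _ all_rep] := rep_nonleafy xP (introT subsetPn (ex_intro2 _ _ y' y'N y'nl)).
by move: yl; rewrite (all_rep y yN) -(all_rep y' y'N) (negbTE y'nl).
Qed.

Lemma rep_D_leaf y : y \in D -> y \in leaves ends setT ->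
  [/\ rep y \in P, y \in Dnbhd (rep y) & leafy (rep y)].
Proof.
move=> yD yl; have yP : y \notin P by rewrite -inD.
have [x xP [e _ j]] := dominating_nbr domP yP.
have yx : adj ends setT y x by apply/adjP; exists e.
have -> : rep y = x.
  rewrite /rep (negbTE yP) yl.
  by case: pickP => [x' /(leaf_adj_uniq yl yx) -> //|/(_ x)]; rewrite yx.
have yN : y \in Dnbhd x by rewrite inE yD adjC.
by split => //; apply: leafy_of_leaf_neighbour xP yN yl.
Qed.

Lemma rep_P x : x \in P -> (rep x \in P) = leafy x.
Proof.
move=> xP; have [lx|nlx] := boolP (leafy x); first by rewrite rep_leafy.
by have [+ _ _ _] := rep_nonleafy xP nlx; rewrite inD => /negbTE.
Qed.

Definition Hverts := rep @: [set: V].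

Lemma in_Hverts v :
  (v \in Hverts) = ((v \in P) && leafy v) || ((v \in D) && (v \notin leaves ends setT)).
Proof.
apply/imsetP/idP => [[u _ ->]|]; last first.
  case/orP => /andP [vPD vl]; exists v => //.
    by rewrite rep_leafy.
  by rewrite rep_D_nonleaf.
have [uP|] := boolP (u \in P).
  have [lu|nlu] := boolP (leafy u); first by rewrite rep_leafy // uP lu.
  by have [-> -> _ _] := rep_nonleafy uP nlu; rewrite orbT.
rewrite -inD => uD; have [ul|unl] := boolP (u \in leaves ends setT).
  by have [-> _ ->] := rep_D_leaf uD ul.
by rewrite rep_D_nonleaf // uD unl orbT.
Qed.

Lemma Hverts_P v : v \in Hverts -> v \in P -> leafy v.
Proof. by rewrite in_Hverts inD => /orP [] /andP [] // /negP. Qed.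

Lemma Hverts_D v : v \in Hverts -> v \notin P -> (v \in D) && (v \notin leaves ends setT).
Proof. by rewrite in_Hverts => /orP [] /andP [vP] // _ /negP. Qed.

Definition Hvertex := {v : V | v \in Hverts}.
Definition Hedge := {e : E | e \in M}.
Definition toH a : Hvertex := exist _ (rep a) (imset_f rep (in_setT a)).
Definition Hends (m : Hedge) := (toH (ends (val m)).1, toH (ends (val m)).2).
Definition H := MGraph Hends.
Definition alpha (u : gV H) := #|Dnbhd (val u)|.

Lemma endk_Hends (p : Hedge * bool) : endk Hends p = toH (endk ends (val p.1, p.2)).
Proof. by case: p => m []. Qed.

Lemma in_Hsides (p : Hedge * bool) (u : Hvertex) :
  (p \in sides Hends u) = (rep (endk ends (val p.1, p.2)) == val u).
Proof. by rewrite !inE endk_Hends. Qed.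

Lemma Hdeg_P (u : Hvertex) : val u \in P -> deg Hends setT u = 1.
Proof.
move=> uP; have [m [k [mM mk]]] := matched_side uP.
apply/eqP/cards1P; exists (exist _ m mM, k); apply/setP => -[m' k'].
rewrite in_Hsides inE; apply/eqP/eqP => [/= rep_eq|[-> ->]]; last first.
  by rewrite /= mk rep_leafy // Hverts_P // (valP u).
have m'k'P := M_endk_inP k' (valP m').
have [lz|nlz] := boolP (leafy (endk ends (val m', k'))); last first.
  by have [] := rep_nonleafy m'k'P nlz; rewrite rep_eq inD uP.
rewrite rep_leafy // -mk in rep_eq.
by case: (matched_side_uniq (valP m') mM rep_eq) => m'm ->; congr pair; apply: val_inj.
Qed.

Lemma Hdeg_D (u : Hvertex) : val u \notin P -> 1 < deg Hends setT u.
Proof.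
move=> uP; have /andP [uD unl] := Hverts_D (valP u) uP.
have [x1 x1P [e1 _ j1]] := dominating_nbr domP uP.
have [e2 e2e [x2 j2]] := other_edge j1 (no_loop e1) unl.
have x12 : x1 != x2.
  by apply: contraNneq e2e => x12; rewrite x12 in j1; rewrite (joins_inj j2 j1).
have Hside x e : joins ends e (val u) x -> x \in P ->
    exists2 s, s \in sides Hends u & endk ends (val s.1, s.2) = x.
  move=> j xP; have [m [k [mM mk]]] := matched_side xP.
  exists (exist _ m mM, k); rewrite // in_Hsides /= mk.
  rewrite (rep_nonleaf_neighbour xP _ unl) // inE uD; apply/adjP.
  by exists e; rewrite // joinsC.
have [s1 s1u s1x] := Hside x1 e1 j1 x1P.
have [s2 s2u s2x] := Hside x2 e2 j2 (joins_notinP j2 uP).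
apply/card_gt1P; exists s1, s2; split => //.
by apply: contraNneq x12 => s12; rewrite -s1x -s2x s12.
Qed.

Lemma hleafE (u : gV H) : hleaf u = (val u \in P).
Proof.
rewrite /hleaf; have [uP|uP] := boolP (val u \in P); first by rewrite Hdeg_P.
by have := Hdeg_D uP; case: (deg _ _ _) => [|[]].
Qed.

Lemma H_no_isolated : no_isolated H.
Proof.
move=> u; have [uP|uP] := boolP (val u \in P); first by rewrite Hdeg_P.
exact: ltnW (Hdeg_D uP).
Qed.

Lemma alpha_gt0 (u : gV H) : hleaf u -> 0 < alpha u.
Proof.
by rewrite hleafE => /Dnbhd_neq0 [y yN]; apply/card_gt0P; exists y.
Qed.

Definition from_S2V (s : S2_V alpha) : V :=
  match s with
  | inl (inl w) => val (val w)
  | inl (inr c) => enum_val (A := Dnbhd (val (val (tag c)))) (tagged c)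
  | inr p => endk ends (val p.1, p.2)
  end.

Definition edge_between x y d := odflt d [pick e | joins ends e x y].

Lemma joins_edge_between x y d : adj ends setT x y -> joins ends (edge_between x y d) x y.
Proof.
by case/adjP=> e _ j; rewrite /edge_between; case: pickP => [e' //|/(_ e)]; rewrite j.
Qed.

Lemma edge_between_eq x y d e : joins ends e x y -> edge_between x y d = e.
Proof.
move=> j; have xy : adj ends setT x y by apply/adjP; exists e.
exact: joins_inj (joins_edge_between d xy) j.
Qed.

Definition from_S2E (s : S2_E alpha) : E :=
  let: (u, v) := S2_ends s in
  match s with
  | inl (inl m) => val m
  | inl (inr b) => edge_between (from_S2V u) (from_S2V v) (val (val b).1)
  | inr c => edge_between (from_S2V u) (from_S2V v) (val (val (tag c)).1)
  end.

Lemma from_S2V_nonleaf w :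
  from_S2V (inl (inl w)) \in D /\ from_S2V (inl (inl w)) \notin leaves ends setT.
Proof.
have wP : val (val w) \notin P by rewrite -hleafE (valP w).
by case/andP: (Hverts_D (valP (val w)) wP).
Qed.

Lemma from_S2V_leafcopy c : [/\ from_S2V (inl (inr c)) \in D,
  from_S2V (inl (inr c)) \in leaves ends setT &
  from_S2V (inl (inr c)) \in Dnbhd (val (val (tag c)))].
Proof.
case: c => t i /=; have tP : val (val t) \in P by rewrite -hleafE (valP t).
have /subsetP lt := Hverts_P (valP (val t)) tP.
have yN := enum_valP i; rewrite yN (lt _ yN); by move: yN; rewrite inE => /andP [yD _].
Qed.

Lemma from_S2V_side p : from_S2V (inr p) \in P.
Proof. exact: M_endk_inP (valP p.1). Qed.

Lemma hleaf_endk (p : Hedge * bool) :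
  @hleaf H (endk Hends p) = leafy (endk ends (val p.1, p.2)).
Proof. by rewrite hleafE endk_Hends rep_P // M_endk_inP // (valP p.1). Qed.

Lemma from_S2E_joins s :
  joins ends (from_S2E s) (from_S2V (S2_ends s).1) (from_S2V (S2_ends s).2).
Proof.
case: s => [[m|[p pnl]]|[[p pl] i]] /=; first exact: joins_ends.
- apply: joins_edge_between; rewrite /= endk_Hends /= adjC.
  rewrite hleaf_endk in pnl.
  by have [_ _ ->] := rep_nonleafy (M_endk_inP _ (valP p.1)) pnl.
- have lx : leafy (endk ends (val p.1, p.2)) by rewrite -hleaf_endk.
  apply: joins_edge_between => /=; move: (enum_valP i); move: (enum_val i) => y.
  by rewrite endk_Hends /= rep_leafy ?M_endk_inP ?(valP p.1) // inE => /andP [].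
Qed.

Definition vertex_kind v := if v \in P then 0 else if v \in leaves ends setT then 1 else 2.

Lemma vkind_from_S2V s :
  vertex_kind (from_S2V s) = if s is inl s' then (if s' is inl _ then 2 else 1) else 0.
Proof.
rewrite /vertex_kind; case: s => [[w|c]|p]; last by rewrite from_S2V_side.
- by case: (from_S2V_nonleaf w); rewrite inD => /negbTE -> /negbTE ->.
- by case: (from_S2V_leafcopy c); rewrite inD => /negbTE -> ->.
Qed.

Lemma from_S2V_inj : injective from_S2V.
Proof.
move=> s s' same; have := congr1 vertex_kind same; rewrite !vkind_from_S2V.
case: s s' same => [[w|c]|p] [[w'|c']|p'] //= same _.
- by rewrite (val_inj (val_inj same)).
- have [_ yl] := from_S2V_leafcopy c; rewrite inE adjC => /andP [_ ty].
  have [_ _] := from_S2V_leafcopy c'; rewrite inE adjC /= -same => /andP [_ t'y].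
  move: (leaf_adj_uniq yl ty t'y) same; case: c c' {yl ty t'y} => [t i] [t' i'] /=.
  by move=> /val_inj /val_inj tt'; subst t' => /enum_val_inj ->.
- case: p p' same => [m k] [m' k'] /= same.
  by case: (matched_side_uniq (valP m) (valP m') same) => /val_inj -> ->.
Qed.

Lemma from_S2V_surj v : exists s, from_S2V s = v.
Proof.
have [vP|vP] := boolP (v \in P).
  by have [m [k [mM mk]]] := matched_side vP; exists (inr (exist _ m mM, k)).
have vD : v \in D by rewrite inD.
have [vl|vnl] := boolP (v \in leaves ends setT); last first.
  have vH : v \in Hverts by rewrite in_Hverts vD vnl orbT.
  have uH : ~~ @hleaf H (exist _ v vH) by rewrite hleafE.
  by exists (inl (inl (exist _ (exist _ v vH) uH))).
have [rvP vN lrv] := rep_D_leaf vD vl.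
have rvH : rep v \in Hverts by rewrite in_Hverts rvP lrv.
have tH : @hleaf H (exist _ (rep v) rvH) by rewrite hleafE.
exists (inl (inr (existT (fun t : {u : gV H | hleaf u} => 'I_(alpha (val t)))
  (exist _ (exist _ (rep v) rvH) tH) (enum_rank_in vN v)))).
by rewrite /= enum_rankK_in.
Qed.

Lemma from_S2E_surj e : exists s, from_S2E s = e.
Proof.
have [eM|eM] := boolP (e \in M); first by exists (inl (inl (exist _ e eM))).
have [x [y [xP yD j]]] := nonmatching_edge_ends eM.
have [m [k [mM mk]]] := matched_side xP.
pose p : Hedge * bool := (exist _ m mM, k).
have yN : y \in Dnbhd x by rewrite inE yD; apply/adjP; exists e.
have [yl|ynl] := boolP (y \in leaves ends setT).
  have lx := leafy_of_leaf_neighbour xP yN yl.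
  have pl : @hleaf H (endk Hends p) by rewrite hleaf_endk /= mk.
  have yN' : y \in Dnbhd (val (endk Hends p)) by rewrite endk_Hends /= mk rep_leafy.
  exists (inr (existT _ (exist _ p pl) (enum_rank_in yN' y))).
  by rewrite /from_S2E /= enum_rankK_in // mk; apply: edge_between_eq.
have pnl : ~~ @hleaf H (endk Hends p).
  by rewrite hleaf_endk /= mk; apply/subsetPn; exists y.
exists (inl (inr (exist _ p pnl))).
rewrite /from_S2E /= endk_Hends /= mk (rep_nonleaf_neighbour xP yN ynl).
by apply: edge_between_eq; rewrite joinsC.
Qed.

Lemma G_iso_S2 : mg_iso (MGraph ends) (S2 alpha).
Proof.
apply: mg_iso_sym; apply: (parallel_free_mg_iso (@S2_parallel_free H alpha)).
- exact: from_S2V_inj.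
- exact: from_S2V_surj.
- exact: from_S2E_surj.
- exact: from_S2E_joins.
Qed.

End MinimalDPDP.

Theorem theorem4p5 (V E : finType) (ends : E -> V * V) (D P : {set V}) :
  minimal_DPDP ends -> DPpair ends setT D P ->
  [/\ (* (1) *) maxset (independent ends setT) D,
      (* (2) every vertex of G[P] has degree exactly 1 *)
      (forall x, x \in P -> induced_deg ends setT P x = 1),
      (* (3) *)
      (forall x, x \in P ->
         #|nbhd ends setT x :\: P| = 1 \/
         (nbhd ends setT x :\: P != set0 /\
          nbhd ends setT x :\: P \subset leaves ends setT))
    & (* (4) *)
      exists (H : mgraph) (alpha : gV H -> nat),
        [/\ no_isolated H,
            (forall v : gV H, hleaf v -> 0 < alpha v)
          & mg_iso (MGraph ends) (S2 alpha)]].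
Proof.
move=> minG /and4P [/eqP DP_disjoint /eqP DP_cover domD /andP [domP]].
case/existsP => M /andP [/andP [_ /forall_inP M_edge] /forall_inP M_perfect].
have {}M_perfect x : x \in P -> #|M_at ends M x| = 1 by move/M_perfect/eqP.
split.
- by apply: (D_maximal_independent (D := D) (P := P) (M := M)).
- by move=> x xP; apply: (induced_deg_P (D := D) (P := P) (M := M)).
- by move=> x xP; apply: (P_neighbourhood (D := D) (P := P) (M := M)).
exists (H ends D P M), (@alpha _ _ ends D P M); split.
- by apply: (H_no_isolated (D := D) (P := P) (M := M)).
- by move=> u; apply: (alpha_gt0 (D := D) (P := P) (M := M)).
- by apply: (G_iso_S2 (D := D) (P := P) (M := M)).
Qed.
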